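(* Let $\mathcal A\subset\mathbb R^d$ be finite and nonempty, $\mathcal D=\mathrm{conv}(\mathcal A)$, and let $f$ be convex and differentiable on an open set containing $\mathcal D$. Let $x^*\in\arg\min_{\mathcal D}f$ and let $x\in\mathcal D$ with $f(x)>f(x^* )$. Let $S\in\mathcal S_x(\mathcal A)$ be an active set for $x$, $r:=-\nabla f(x)$ and $\hat e:=(x^*-x)/\|x^*-x\|$ (so that $\langle r,\hat e\rangle>0$). Let $s\in\arg\max_{a\in\mathcal A}\langle r,a\rangle$, $v\in\arg\min_{a\in S}\langle r,a\rangle$ and $d:=s-v$ (the pairwise Frank-Wolfe direction). Then $$\frac{\langle r,d\rangle}{\langle r,\hat e\rangle}\ \ge\ \mathrm{PWidth}(\mathcal A).$$
   Context: Euclidean norm and inner product. For a finite set $\mathcal B\subseteq\mathbb R^d$ and $x\in\mathrm{conv}(\mathcal B)$, $\mathcal S_x(\mathcal B)$ is the family of subsets $S\subseteq\mathcal B$ such that $x$ is a proper convex combination of all elements of $S$ ($x=\sum_{v\in S}\alpha_vv$, all $\alpha_v>0$, $\sum\alpha_v=1$). For $r\ne0$, the pyramidal directional width is $\mathrm{PdirW}(\mathcal B,r,x):=\min_{S\in\mathcal S_x(\mathcal B)}\max_{s\in\mathcal B,\,v\in S}\langle r/\|r\|,s-v\rangle$. The pyramidal width of $\mathcal A$ is $\mathrm{PWidth}(\mathcal A):=\inf\{\mathrm{PdirW}(\mathcal K\cap\mathcal A,r,x)\}$, the infimum over all nonempty faces $\mathcal K$ of the polytope $\mathrm{conv}(\mathcal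 A)$ (including $\mathrm{conv}(\mathcal A)$ itself), all $x\in\mathcal K$, and all $r\in\mathrm{cone}(\mathcal K-x)\setminus\{0\}$, where $\mathrm{cone}(\mathcal K-x)=\{\sum_i\lambda_i(y_i-x):\lambda_i\ge0,\ y_i\in\mathcal K\}$. *)

From mathcomp Require Import all_boot.
From Stdlib Require Import Reals.

Set Implicit Arguments.
Unset Strict Implicit.
Unset Printing Implicit Defensive.

Local Open Scope R_scope.

Definition vec (d : nat) := 'I_d -> R.

Definition dot d (x y : vec d) : R := \big[Rplus/R0]_(k < d) (x k * y k).
Definition norm d (x : vec d) : R := sqrt (dot x x).
Definition vsub d (x y : vec d) : vec d := fun k => x k - y k.
Definition vadd d (x y : vec d) : vec d := fun k => x k + y k.
Definition vscale d (t : R) (x : vec d) : vec d := fun k => t * x k.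
Definition vopp d (x : vec d) : vec d := fun k => - x k.

(* A finite point set A = { a i | i : 'I_n } is given by an indexing
   a : 'I_n -> vec d.  Sub-families of A are given by index sets. *)

Definition conv_of d n (a : 'I_n -> vec d) (T : {set 'I_n}) (x : vec d) : Prop :=
  exists w : 'I_n -> R,
    (forall i, i \in T -> 0 <= w i) /\
    \big[Rplus/R0]_(i in T) w i = 1 /\
    x = (fun k => \big[Rplus/R0]_(i in T) (w i * a i k)).

Definition conv d n (a : 'I_n -> vec d) (x : vec d) : Prop := conv_of a setT x.

Definition proper_comb d n (a : 'I_n -> vec d) (S : {set 'I_n}) (x : vec d) : Prop :=
  exists w : 'I_n -> R,
    (forall i, i \in S -> 0 < w i) /\
    \big[Rplus/R0]_(i in S) w i = 1 /\
    x = (fun k => \big[Rplus/R0]_(i in S) (w i * a i k)).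

Definition in_Sx d n (a : 'I_n -> vec d) (T : {set 'I_n}) (x : vec d)
  (S : {set 'I_n}) : Prop :=
  S \subset T /\ proper_comb a S x.

(* max_{s in B, v in S} < r/||r||, s - v >.  Since S is nonempty and
   S is contained in B, the true maximum is >= 0, so 0 is a harmless
   identity element for Rmax. *)
Definition pyr_max d n (a : 'I_n -> vec d) (T S : {set 'I_n}) (r : vec d) : R :=
  \big[Rmax/R0]_(s in T) \big[Rmax/R0]_(v in S)
     dot (vscale (/ norm r) r) (vsub (a s) (a v)).

Definition is_PdirW d n (a : 'I_n -> vec d) (T : {set 'I_n}) (r x : vec d) (w : R)
  : Prop :=
  (exists S, in_Sx a T x S /\ w = pyr_max a T S r) /\
  (forall S, in_Sx a T x S -> w <= pyr_max a T S r).

(* Faces of the polytope conv(A): K = conv(A) ∩ {y | <c,y> = m} where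
   <c,y> <= m is valid on conv(A) (c = 0, m = 0 gives conv(A) itself). *)
Definition is_face d n (a : 'I_n -> vec d) (K : vec d -> Prop) : Prop :=
  exists (c : vec d) (m : R),
    (forall y, conv a y -> dot c y <= m) /\
    (forall y, K y <-> (conv a y /\ dot c y = m)).

Definition in_cone d (K : vec d -> Prop) (x r : vec d) : Prop :=
  exists (p : nat) (lam : 'I_p -> R) (ys : 'I_p -> vec d),
    (forall i, 0 <= lam i) /\ (forall i, K (ys i)) /\
    r = (fun k => \big[Rplus/R0]_(i < p) (lam i * (ys i k - x k))).

(* The set of values PdirW(K ∩ A, r, x) over nonempty faces K, x in K,
   r in cone(K - x) \ {0}.  K ∩ A is represented by the index set T. *)
Definition PWidth_values d n (a : 'I_n -> vec d) (w : R) : Prop :=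
  exists (K : vec d -> Prop) (T : {set 'I_n}) (x r : vec d),
    is_face a K /\ (exists y, K y) /\
    (forall i, i \in T <-> K (a i)) /\
    K x /\ in_cone K x r /\ r <> (fun _ => 0) /\
    is_PdirW a T r x w.

Definition is_glb (P : R -> Prop) (w : R) : Prop :=
  (forall z, P z -> w <= z) /\
  (forall w', (forall z, P z -> w' <= z) -> w' <= w).

Definition is_PWidth d n (a : 'I_n -> vec d) (w : R) : Prop :=
  is_glb (PWidth_values a) w.

Definition is_open d (U : vec d -> Prop) : Prop :=
  forall y, U y -> exists eps, 0 < eps /\ forall z, norm (vsub z y) < eps -> U z.

Definition convex_set d (U : vec d -> Prop) : Prop :=
  forall y z t, U y -> U z -> 0 <= t <= 1 ->
    U (vadd (vscale t y) (vscale (1 - t) z)).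

Definition convex_on d (U : vec d -> Prop) (f : vec d -> R) : Prop :=
  forall y z t, U y -> U z -> 0 <= t <= 1 ->
    f (vadd (vscale t y) (vscale (1 - t) z)) <= t * f y + (1 - t) * f z.

Definition has_gradient d (f : vec d -> R) (y g : vec d) : Prop :=
  forall eps, 0 < eps -> exists delta, 0 < delta /\
    forall h, norm h < delta ->
      Rabs (f (vadd y h) - f y - dot g h) <= eps * norm h.

(* Split r = -grad f(x) as r = p + r', with r' in the cone generated by A - x,
   p in its polar cone and p orthogonal to r' (Moreau).  Then p exposes a face
   K of conv(A) containing x and the active set S, and r' lies in cone(K - x).
   On K the functionals r and r' differ by a constant, so
   PWidth(A) <= PdirW(K cap A, r', x) <= <r, s - v> / |r'|.  Finally
   <p, x* - x> <= 0 gives <r, e> <= <r', e> <= |r'|, and <r, e> > 0 by the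
   gradient inequality of convex functions. *)

From HB Require Import structures.
From mathcomp Require Import all_boot.
From Stdlib Require Import Reals Lra Classical FunctionalExtensionality.

Set Implicit Arguments.
Unset Strict Implicit.

Local Open Scope R_scope.

HB.instance Definition _ := Monoid.isComLaw.Build R R0 Rplus
  (fun a b c => esym (Rplus_assoc a b c)) Rplus_comm Rplus_0_l.
HB.instance Definition _ := Monoid.isComLaw.Build R R1 Rmult
  (fun a b c => esym (Rmult_assoc a b c)) Rmult_comm Rmult_1_l.
HB.instance Definition _ := Monoid.isMulLaw.Build R R0 Rmult Rmult_0_l Rmult_0_r.
HB.instance Definition _ := Monoid.isAddLaw.Build R Rmult Rplus
  Rmult_plus_distr_r Rmult_plus_distr_l.

Lemma sum_le (I : finType) (P : pred I) (F G : I -> R) :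
  (forall i, P i -> F i <= G i) ->
  \big[Rplus/R0]_(i | P i) F i <= \big[Rplus/R0]_(i | P i) G i.
Proof. by move=> FG; elim/big_ind2: _ => // *; lra. Qed.

Lemma sum_ge0 (I : finType) (P : pred I) (F : I -> R) :
  (forall i, P i -> 0 <= F i) -> 0 <= \big[Rplus/R0]_(i | P i) F i.
Proof. by move=> F_ge0; elim/big_ind: _ => // *; lra. Qed.

Lemma sumB (I : finType) (P : pred I) (F G : I -> R) :
  \big[Rplus/R0]_(i | P i) (F i - G i) =
  \big[Rplus/R0]_(i | P i) F i - \big[Rplus/R0]_(i | P i) G i.
Proof.
rewrite (eq_bigr (fun i => F i + G i * (-1))) => [|i _]; last ring.
by rewrite big_split /= -big_distrl /=; ring.
Qed.

Lemma bigmax_le (I : finType) (P : pred I) (F : I -> R) B :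
  0 <= B -> (forall i, P i -> F i <= B) -> \big[Rmax/R0]_(i | P i) F i <= B.
Proof. by move=> B_ge0 FB; elim/big_ind: _ => // *; apply: Rmax_lub. Qed.

Lemma exists_argmin (X : finType) (P : X -> Prop) (F : X -> R) (x0 : X) :
  P x0 -> exists2 x, P x & forall y, P y -> F x <= F y.
Proof.
move=> Px0.
suff [x Px xmin] : exists2 x, P x & forall y, y \in enum X -> P y -> F x <= F y.
  by exists x => // y; apply: xmin; rewrite mem_enum.
elim: (enum X) => [|y l [x Px xmin]]; first by exists x0.
have [Py|NPy] := classic (P y); last first.
  by exists x => // z; rewrite inE => /orP [/eqP -> //|]; apply: xmin.
have [Fyx|Fxy] := Rle_lt_dec (F y) (F x).
  exists y => // z; rewrite inE => /orP [/eqP -> _|zl Pz]; first lra.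
  by have := xmin z zl Pz; lra.
exists x => // z; rewrite inE => /orP [/eqP -> _|]; first lra.
exact: xmin.
Qed.

Lemma le_of_forall_eps (A B C : R) :
  0 <= C -> (forall eps, 0 < eps -> A <= B + eps * C) -> A <= B.
Proof.
move=> C_ge0 AB; apply: Rnot_lt_le => BA.
set q := (A - B) / (2 * (C + 1)).
have q_gt0 : 0 < q by apply: Rdiv_lt_0_compat; lra.
have AB_q : A - B = 2 * (C + 1) * q by rewrite /q; field; lra.
have := AB q q_gt0; nra.
Qed.

Section Vectors.
Variable d : nat.
Implicit Types u v w p r x y e : vec d.

Definition vzero : vec d := fun _ => 0.

Lemma dotC u v : dot u v = dot v u.
Proof. by apply: eq_bigr => k _; rewrite Rmult_comm. Qed.

Lemma dotDr u v w : dot u (vadd v w) = dot u v + dot u w.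
Proof. by rewrite /dot -big_split /=; apply: eq_bigr => k _; rewrite /vadd; ring. Qed.

Lemma dotZr u t v : dot u (vscale t v) = t * dot u v.
Proof. by rewrite /dot big_distrr /=; apply: eq_bigr => k _; rewrite /vscale; ring. Qed.

Lemma dotBr u v w : dot u (vsub v w) = dot u v - dot u w.
Proof. by rewrite /dot -sumB; apply: eq_bigr => k _; rewrite /vsub; ring. Qed.

Lemma dotDl u v w : dot (vadd v w) u = dot v u + dot w u.
Proof. by rewrite dotC dotDr !(dotC u). Qed.

Lemma dotZl u t v : dot (vscale t v) u = t * dot v u.
Proof. by rewrite dotC dotZr dotC. Qed.

Lemma dotBl u v w : dot (vsub v w) u = dot v u - dot w u.
Proof. by rewrite dotC dotBr !(dotC u). Qed.

Lemma dotNl u v : dot (vopp u) v = - dot u v.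
Proof.
have -> : vopp u = vscale (-1) u by apply: functional_extensionality => k; rewrite /vopp /vscale; ring.
by rewrite dotZl; ring.
Qed.

Lemma dot0r u : dot u vzero = 0.
Proof. by rewrite /dot big1 // => k _; rewrite /vzero; ring. Qed.

Lemma dotvv_ge0 u : 0 <= dot u u.
Proof. by apply: sum_ge0 => k _; nra. Qed.

Lemma dot_sum p n (a : 'I_n -> vec d) (T : {set 'I_n}) (c : 'I_n -> R) :
  dot p (fun k => \big[Rplus/R0]_(i in T) (c i * a i k)) =
  \big[Rplus/R0]_(i in T) (c i * dot p (a i)).
Proof.
rewrite /dot; under eq_bigr do rewrite big_distrr /=.
rewrite exchange_big /=; apply: eq_bigr => i _.
by rewrite big_distrr /=; apply: eq_bigr => k _; ring.
Qed.

Lemma dot_subZ_self u v t :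
  dot (vsub u (vscale t v)) (vsub u (vscale t v)) =
  dot u u - 2 * t * dot u v + t * t * dot v v.
Proof. by rewrite !dotBl !dotBr !dotZl !dotZr (dotC v u); ring. Qed.

Lemma dotvv_gt0 u v : dot u v <> 0 -> 0 < dot v v.
Proof.
move=> uv_neq0; have [vv_le0|//] := Rle_lt_dec (dot v v) 0.
have vv0 : dot v v = 0 by have := dotvv_ge0 v; lra.
(* With v.v = 0 the square |u - t v|^2 is affine in t; this t makes it -1. *)
have := dotvv_ge0 (vsub u (vscale ((dot u u + 1) / (2 * dot u v)) v)).
rewrite dot_subZ_self vv0.
have -> : 2 * ((dot u u + 1) / (2 * dot u v)) * dot u v = dot u u + 1 by field.
lra.
Qed.

Lemma norm_ge0 u : 0 <= norm u.
Proof. exact: sqrt_pos. Qed.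

Lemma norm_mul_self u : norm u * norm u = dot u u.
Proof. exact/sqrt_sqrt/dotvv_ge0. Qed.

Lemma normZ t u : norm (vscale t u) = Rabs t * norm u.
Proof.
rewrite /norm dotZl dotZr -Rmult_assoc sqrt_mult_alt; last nra.
by rewrite -sqrt_Rsqr_abs.
Qed.

Lemma dot_unit_le_norm u e : dot e e = 1 -> dot u e <= norm u.
Proof.
move=> ee1; have := dotvv_ge0 (vsub u (vscale (dot u e) e)).
rewrite dot_subZ_self ee1 => sq_ge0.
have := norm_mul_self u; have := norm_ge0 u; nra.
Qed.

Lemma norm0 : norm vzero = 0.
Proof. by rewrite /norm dot0r sqrt_0. Qed.

Lemma norm_gt0 u v : dot u v <> 0 -> 0 < norm v.
Proof. by move=> /dotvv_gt0 vv_gt0; apply: sqrt_lt_R0. Qed.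

Lemma dot_dir_le_norm_sub r p x y :
  dot p y <= dot p x -> 0 < norm (vsub y x) ->
  dot r (vscale (/ norm (vsub y x)) (vsub y x)) <= norm (vsub r p).
Proof.
move=> pyx nyx_gt0; set e := vscale _ _.
have inv_gt0 := Rinv_0_lt_compat _ nyx_gt0.
have ee1 : dot e e = 1.
  by rewrite /e dotZl dotZr -norm_mul_self; field; lra.
have pe_le0 : dot p e <= 0 by rewrite /e dotZr dotBr; nra.
have := dot_unit_le_norm (vsub r p) ee1; rewrite dotBl; lra.
Qed.

End Vectors.

Arguments vzero {d}.

Section FiniteCones.
Variable d : nat.
Implicit Types (u r p : vec d) (G : seq (vec d)).

Fixpoint in_gen_cone G u : Prop :=
  if G is g :: G' then exists2 t, 0 <= t & in_gen_cone G' (vsub u (vscale t g))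
  else u = vzero.

Fixpoint in_polar G p : Prop :=
  if G is g :: G' then dot p g <= 0 /\ in_polar G' p else True.

Definition moreau_decomp G r p : Prop :=
  [/\ in_polar G p, in_gen_cone G (vsub r p) & dot p (vsub r p) = 0].

Lemma polar_gen_cone_le0 G p u : in_polar G p -> in_gen_cone G u -> dot p u <= 0.
Proof.
elim: G u => [|g G IH] u /= => [_ -> | [pg pG] [t t_ge0 uG]]; first by rewrite dot0r; lra.
by have := IH _ pG uG; rewrite dotBr dotZr; nra.
Qed.

Lemma moreau_nil r : moreau_decomp [::] r r.
Proof.
rewrite /moreau_decomp.
have -> : vsub r r = vzero by apply: functional_extensionality => k; rewrite /vsub /vzero; ring.
by split => //; rewrite dot0r.
Qed.

Section OrthProjection.
Variable g : vec d.

Definition orth_proj u : vec d := vsub u (vscale (dot u g / dot g g) g).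

Lemma dot_orth_proj_l u : 0 < dot g g -> dot (orth_proj u) g = 0.
Proof. by move=> gg_gt0; rewrite /orth_proj dotBl dotZl; field; lra. Qed.

Lemma dot_orth_proj_r p u : dot p g = 0 -> dot p (orth_proj u) = dot p u.
Proof. by move=> pg0; rewrite /orth_proj dotBr dotZr pg0; ring. Qed.

Lemma polar_orth_proj G p : dot p g = 0 -> in_polar (map orth_proj G) p -> in_polar G p.
Proof.
move=> pg0; elim: G => //= h G IH [ph pG].
by split; [rewrite -(dot_orth_proj_r h pg0) | exact: IH].
Qed.

Lemma gen_cone_orth_proj G u :
  in_gen_cone (map orth_proj G) u -> exists2 w, in_gen_cone G w & u = orth_proj w.
Proof.
elim: G u => [|h G IH] u /=.
  move=> ->; exists vzero => //; apply: functional_extensionality => k.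
  by rewrite /orth_proj dotC dot0r /vsub /vscale /vzero /Rdiv; ring.
move=> [t t_ge0 /IH [w wG uw]]; exists (vadd w (vscale t h)).
  exists t => //; congr in_gen_cone: wG.
  by apply: functional_extensionality => k; rewrite /vsub /vadd /vscale; ring.
apply: functional_extensionality => k; have := f_equal (fun f => f k) uw.
rewrite /orth_proj /vsub /vadd /vscale dotDl dotZl /Rdiv => uwk.
have -> : u k = u k - t * (h k - dot h g * / dot g g * g k)
               + t * (h k - dot h g * / dot g g * g k) by ring.
by rewrite uwk; ring.
Qed.

End OrthProjection.

Lemma orth_residuals_dot_ge0 r p q :
  dot p (vsub r p) = 0 -> dot q (vsub r q) = 0 -> dot q (vsub r p) <= 0 ->
  0 <= dot p (vsub r q).
Proof.
rewrite !dotBr => pr qr qrp.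
have := dotvv_ge0 (vsub q p); rewrite !dotBl !dotBr (dotC q p) in qrp *.
lra.
Qed.

(* If p is not already polar to g, decompose the projection of r orthogonal
   to g instead and add g back to the residual; its coefficient is nonnegative
   by comparison with p. *)
Lemma moreau_cons g G r p :
  moreau_decomp G r p ->
  (exists q, moreau_decomp (map (orth_proj g) G) (orth_proj g r) q) ->
  exists p', moreau_decomp (g :: G) r p'.
Proof.
move=> [pG rpG prp] [q [qG rqG qrq]].
have [pg_le0|pg_gt0] := Rle_lt_dec (dot p g) 0.
  exists p; split => //; exists 0; first lra.
  by congr in_gen_cone: rpG; apply: functional_extensionality => k; rewrite /vsub /vscale; ring.
have gg_gt0 : 0 < dot g g by apply: (dotvv_gt0 (u := p)); lra.
have [w wG rqw] := gen_cone_orth_proj rqG.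
have qE : q = vsub (orth_proj g r) (orth_proj g w).
  apply: functional_extensionality => k; have := f_equal (fun f => f k) rqw.
  by rewrite /vsub => <-; ring.
have qg0 : dot q g = 0 by rewrite qE dotBl !dot_orth_proj_l //; ring.
set c := (dot r g - dot w g) / dot g g.
have rqE : vsub r q = vadd w (vscale c g).
  rewrite qE; apply: functional_extensionality => k.
  by rewrite /vsub /vadd /vscale /orth_proj /vsub /vscale /c; field; lra.
have rq_orth : dot q (vsub r q) = 0.
  by rewrite rqE dotDr dotZr qg0 -(dot_orth_proj_r w qg0) -rqw qrq; ring.
have qG' := polar_orth_proj qg0 qG.
have c_ge0 : 0 <= c.
  have := orth_residuals_dot_ge0 prp rq_orth (polar_gen_cone_le0 qG' rpG).
  have := polar_gen_cone_le0 pG wG; rewrite rqE dotDr dotZr; nra.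
exists q; split => //=; first by split => //; lra.
exists c => //; congr in_gen_cone: wG.
by rewrite rqE; apply: functional_extensionality => k; rewrite /vsub /vadd /vscale; ring.
Qed.

Lemma moreau_decomposition G r : exists p, moreau_decomp G r p.
Proof.
move sizeG : (size G) => m; elim: m G sizeG r => [|m IH] [|g G] //= => [_ r|[sizeG] r].
  by exists r; apply: moreau_nil.
have [p rp] := IH G sizeG r.
by apply: (moreau_cons rp); apply: IH; rewrite size_map.
Qed.

End FiniteCones.

Section Polytope.
Variables (d n : nat) (a : 'I_n -> vec d).
Implicit Types (x y p r : vec d) (S T : {set 'I_n}).

Lemma conv_vertex i : conv a (a i).
Proof.
exists (fun j => if j == i then 1 else 0); split; [|split].
- by move=> j _; case: (j == i); lra.
- rewrite (bigD1 i) ?in_setT //= eqxx big1; first ring.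
  by move=> j /andP [_ /negbTE ->].
- apply: functional_extensionality => k.
  rewrite (bigD1 i) ?in_setT //= eqxx big1; first ring.
  by move=> j /andP [_ /negbTE ->]; ring.
Qed.

Lemma conv_dot_le p m y : (forall i, dot p (a i) <= m) -> conv a y -> dot p y <= m.
Proof.
move=> am [c [c_ge0 [c1 ->]]]; rewrite dot_sum.
apply: (@Rle_trans _ (\big[Rplus/R0]_(i in setT) (c i * m))).
  by apply: sum_le => i iT; apply: Rmult_le_compat_l; [exact: c_ge0 | exact: am].
by rewrite -big_distrl /= c1; lra.
Qed.

Lemma proper_comb_dot_eq p x S :
  (forall i, dot p (a i) <= dot p x) -> proper_comb a S x ->
  forall i, i \in S -> dot p (a i) = dot p x.
Proof.
move=> ax [c [c_gt0 [c1 xE]]] i iS.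
have gap0 : \big[Rplus/R0]_(j in S) (c j * (dot p x - dot p (a j))) = 0.
  rewrite (eq_bigr (fun j => c j * dot p x - c j * dot p (a j))) => [|j _]; last ring.
  by rewrite sumB -big_distrl /= c1 xE dot_sum Rmult_1_l; apply: Rminus_diag_eq.
move: gap0; rewrite (bigD1 i) //=; set rest := \big[Rplus/R0]_(_ | _) _ => gap0.
have rest_ge0 : 0 <= rest.
  by apply: sum_ge0 => j /andP [jS _]; have := c_gt0 j jS; have := ax j; nra.
apply: Rle_antisym; first exact: ax.
by apply: Rnot_lt_le => ai_lt; have := c_gt0 i iS; nra.
Qed.

Definition exposed_face p x y : Prop := conv a y /\ dot p y = dot p x.

Definition face_index p x : {set 'I_n} :=
  [set i | Req_dec_T (dot p (a i)) (dot p x)].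

Lemma mem_face_index p x i : i \in face_index p x <-> exposed_face p x (a i).
Proof.
rewrite inE /exposed_face; case: Req_dec_T => [eq|ne]; last by split => // [[]].
by split => // _; split => //; exact: conv_vertex.
Qed.

Lemma is_face_exposed p x :
  (forall i, dot p (a i) <= dot p x) -> is_face a (exposed_face p x).
Proof. by move=> ax; exists p, (dot p x); split => // y; exact: conv_dot_le. Qed.

Lemma polar_vertices p x L i :
  in_polar (map (fun j => vsub (a j) x) L) p -> i \in L -> dot p (a i) <= dot p x.
Proof.
elim: L => //= j L IH [pj pL]; rewrite inE => /orP [/eqP ->|]; last exact: IH.
by move: pj; rewrite dotBr; lra.
Qed.

(* A generator a i - x enters the representation of u with a positive weight
   only if p (a i - x) = 0, i.e. only if a i lies on the face exposed by p. *)
Lemma in_cone_exposed p x L u :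
  in_polar (map (fun i => vsub (a i) x) L) p ->
  in_gen_cone (map (fun i => vsub (a i) x) L) u -> dot p u = 0 ->
  in_cone (exposed_face p x) x u.
Proof.
elim: L u => [|i L IH] u /=.
  move=> _ -> _; exists O, (fun _ => 0), (fun _ => x).
  by split; [case | split; [case | apply: functional_extensionality => k; rewrite big_ord0]].
move=> [pi pL] [t t_ge0 uL] pu0.
have tpi0 : t * dot p (vsub (a i) x) = 0.
  by have := polar_gen_cone_le0 pL uL; rewrite dotBr dotZr pu0; nra.
have [q [lam [ys [lam_ge0 [ysK uE]]]]] := IH _ pL uL
  ltac:(by rewrite dotBr dotZr tpi0 pu0; ring).
have [t0|t_neq0] := Req_dec t 0.
  exists q, lam, ys; split => //; split => //; rewrite -uE t0.
  by apply: functional_extensionality => k; rewrite /vsub /vscale; ring.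
have aiK : exposed_face p x (a i).
  split; first exact: conv_vertex.
  have : dot p (vsub (a i) x) = 0 by apply: (Rmult_eq_reg_l t); lra.
  by rewrite dotBr; lra.
exists q.+1, (fun j => if unlift ord0 j is Some j' then lam j' else t),
  (fun j => if unlift ord0 j is Some j' then ys j' else a i).
split; [|split].
- by move=> j; case: (unlift ord0 j).
- by move=> j; case: (unlift ord0 j).
- apply: functional_extensionality => k.
  rewrite big_ord_recl /= unlift_none.
  under eq_bigr do rewrite liftK.
  have := f_equal (fun f => f k) uE => /= <-.
  by rewrite /vsub /vscale; ring.
Qed.

Lemma exists_exposed_face_direction x r : exists p,
  (forall i, dot p (a i) <= dot p x) /\ in_cone (exposed_face p x) x (vsub r p).
Proof.
set G := map (fun i => vsub (a i) x) (enum 'I_n).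
have [p [pG rpG prp]] := moreau_decomposition G r.
exists p; split; last exact: in_cone_exposed pG rpG prp.
by move=> i; apply: polar_vertices pG _; rewrite mem_enum.
Qed.

End Polytope.

Lemma exists_small_step d (h : vec d) del :
  0 < del -> exists2 t, 0 < t <= 1 & norm (vscale t h) < del.
Proof.
move=> del_gt0; have nh_ge0 := norm_ge0 h.
set t := Rmin 1 (del / (2 * (norm h + 1))).
have t_gt0 : 0 < t by apply: Rmin_pos; [lra | apply: Rdiv_lt_0_compat; lra].
have t_le : t <= del / (2 * (norm h + 1)) by apply: Rmin_r.
have delE : del / (2 * (norm h + 1)) * (2 * (norm h + 1)) = del by field; lra.
exists t; first by split => //; apply: Rmin_l.
by rewrite normZ Rabs_pos_eq; nra.
Qed.

Lemma convex_gradient_ineq d (U : vec d -> Prop) f g x y :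
  convex_on U f -> U x -> U y -> has_gradient f x g ->
  f x + dot g (vsub y x) <= f y.
Proof.
move=> fconv Ux Uy fg; set h := vsub y x.
suff : dot g h <= f y - f x by lra.
apply: (le_of_forall_eps (norm_ge0 h)) => eps eps_gt0.
have [del [del_gt0 fdel]] := fg eps eps_gt0.
have [t [t_gt0 t_le1] th_small] := exists_small_step h del_gt0.
have xth : vadd (vscale t y) (vscale (1 - t) x) = vadd x (vscale t h).
  by apply: functional_extensionality => k; rewrite /vadd /vscale /h /vsub; ring.
have := fconv y x t Uy Ux (conj (Rlt_le _ _ t_gt0) t_le1); rewrite xth => fconv_t.
have := fdel _ th_small; rewrite dotZr normZ (Rabs_pos_eq _ (Rlt_le _ _ t_gt0)).
set err := f (vadd x (vscale t h)) - f x - t * dot g h => err_le.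
have := Rle_abs (- err); rewrite Rabs_Ropp; rewrite {}/err in err_le *.
nra.
Qed.

Section PyramidalWidth.
Variables (d n : nat) (a : 'I_n -> vec d).
Implicit Types (x p r : vec d) (S : {set 'I_n}).

Lemma PWidth_le_pyr_max w p x r S :
  is_PWidth a w -> (forall i, dot p (a i) <= dot p x) -> conv a x ->
  in_cone (exposed_face a p x) x r -> r <> vzero -> proper_comb a S x ->
  w <= pyr_max a (face_index a p x) S r.
Proof.
move=> [w_lb _] ax x_conv r_cone r_neq0 Sx.
set T := face_index a p x.
have ST : in_Sx a T x S.
  split => //; apply/subsetP => i iS; apply/mem_face_index.
  by split; [exact: conv_vertex | exact: proper_comb_dot_eq ax Sx i iS].
have [S1 S1x S1min] := exists_argmin (fun S0 => pyr_max a T S0 r) ST.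
apply: Rle_trans (S1min _ ST); apply: w_lb.
exists (exposed_face a p x), T, x, r.
split; first exact: is_face_exposed.
split; first by exists x.
split; first exact: mem_face_index.
do 3!split => //.
by split; first by exists S1.
Qed.

(* On the face exposed by p, r and r - p induce the same differences. *)
Lemma pyr_max_face_le p x r S s v :
  (forall i, dot p (a i) <= dot p x) -> proper_comb a S x ->
  (forall j, dot r (a j) <= dot r (a s)) ->
  (forall j, j \in S -> dot r (a v) <= dot r (a j)) ->
  0 < norm (vsub r p) ->
  pyr_max a (face_index a p x) S (vsub r p) <=
  dot r (vsub (a s) (a v)) / norm (vsub r p).
Proof.
move=> ax Sx s_max v_min nrp_gt0.
have inv_gt0 := Rinv_0_lt_compat _ nrp_gt0.
have sv_ge0 : 0 <= dot r (vsub (a s) (a v)) by rewrite dotBr; have := s_max v; lra.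
have bound_ge0 := Rmult_le_pos _ _ sv_ge0 (Rlt_le _ _ inv_gt0).
apply: bigmax_le => // s' /mem_face_index [_ s'F].
apply: bigmax_le => // v' v'S.
rewrite dotZl Rmult_comm /Rdiv; apply: Rmult_le_compat_r; first lra.
rewrite !dotBr !dotBl s'F (proper_comb_dot_eq ax Sx v'S).
by have := s_max s'; have := v_min v' v'S; lra.
Qed.

End PyramidalWidth.

Theorem theorem3
  (d n : nat) (a : 'I_n -> vec d) (Hn : leq 1 n)
  (U : vec d -> Prop) (f : vec d -> R) (grad : vec d -> vec d)
  (HUopen : is_open U) (HUconv : convex_set U)
  (HDU : forall y, conv a y -> U y)
  (Hfconv : convex_on U f)
  (Hgrad : forall y, U y -> has_gradient f y (grad y))
  (xs x : vec d)
  (Hxs : conv a xs) (Hxsmin : forall y, conv a y -> f xs <= f y)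
  (Hx : conv a x) (Hfx : f x > f xs)
  (S : {set 'I_n}) (HS : proper_comb a S x)
  (s v : 'I_n)
  (Hs : forall j, dot (vopp (grad x)) (a j) <= dot (vopp (grad x)) (a s))
  (HvS : v \in S)
  (Hv : forall j, j \in S -> dot (vopp (grad x)) (a v) <= dot (vopp (grad x)) (a j))
  (w : R) (Hw : is_PWidth a w) :
  let r := vopp (grad x) in
  let e := vscale (/ norm (vsub xs x)) (vsub xs x) in
  let dd := vsub (a s) (a v) in
  dot r dd / dot r e >= w.
Proof.
move=> r e dd.
have rh_gt0 : 0 < dot r (vsub xs x).
  have := convex_gradient_ineq Hfconv (HDU _ Hx) (HDU _ Hxs) (Hgrad _ (HDU _ Hx)).
  by rewrite /r dotNl; lra.
have nh_gt0 : 0 < norm (vsub xs x) by apply: (norm_gt0 (u := r)); lra.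
have re_gt0 : 0 < dot r e.
  by rewrite /e dotZr; apply: Rmult_lt_0_compat => //; apply: Rinv_0_lt_compat.
have [p [ax rp_cone]] := exists_exposed_face_direction a x r.
have re_le : dot r e <= norm (vsub r p) := dot_dir_le_norm_sub r (conv_dot_le ax Hxs) nh_gt0.
have rp_neq0 : vsub r p <> vzero by move=> rp0; move: re_le; rewrite rp0 norm0; lra.
have dd_ge0 : 0 <= dot r dd by rewrite /dd /r dotBr; have := Hs v; lra.
apply: Rle_ge; apply: Rle_trans (PWidth_le_pyr_max Hw ax Hx rp_cone rp_neq0 HS) _.
have nrp_gt0 : 0 < norm (vsub r p) by lra.
apply: Rle_trans (pyr_max_face_le ax HS Hs Hv nrp_gt0) _.
by apply: Rmult_le_compat_l => //; apply: Rinv_le_contravar.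
Qed.
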